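(* Let $A,B$ be positive definite matrices with $mI\le A,B\le MI$ for some scalars $0<m<M$, put $h=M/m$, and let $\Phi$ be a unital positive linear map between matrix algebras. Then \[K(h,p)^{1/p}\Big(\mathrm{Tr}\big[\Phi(A^p)^{1/p}\big]+\mathrm{Tr}\big[\Phi(B^p)^{1/p}\big]\Big)\le\mathrm{Tr}\big[\Phi((A+B)^p)^{1/p}\big]\le K(h,p)^{-1/p}\Big(\mathrm{Tr}\big[\Phi(A^p)^{1/p}\big]+\mathrm{Tr}\big[\Phi(B^p)^{1/p}\big]\Big)\] for all $p<0$ and all $0<p\le1$, and \[K(h,p)^{-1/p}\Big(\mathrm{Tr}\big[\Phi(A^p)^{1/p}\big]+\mathrm{Tr}\big[\Phi(B^p)^{1/p}\big]\Big)\le\mathrm{Tr}\big[\Phi((A+B)^p)^{1/p}\big]\le K(h,p)^{1/p}\Big(\mathrm{Tr}\big[\Phi(A^p)^{1/p}\big]+\mathrm{Tr}\big[\Phi(B^p)^{1/p}\big]\Big)\] for all $p\ge1$.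
   Context: $\mathrm{Tr}$ is the trace, $\le$ the Löwner order; unital positive linear map: preserves positive semidefiniteness and $\Phi(I)=I$. Generalized Kantorovich constant: $K(h,p)=\frac{h^p-h}{(p-1)(h-1)}\Big(\frac{p-1}{p}\frac{h^p-1}{h^p-h}\Big)^p$ (with $K(h,1)=1$ by continuity). *)

From HB Require Import structures.
From mathcomp Require Import all_boot all_order all_algebra.
From mathcomp Require Import sesquilinear spectral.
From mathcomp Require Import complex.
From mathcomp Require Import reals exp.
Set Implicit Arguments. Unset Strict Implicit. Unset Printing Implicit Defensive.
Import Order.TTheory GRing.Theory Num.Theory Num.Def.
Local Open Scope ring_scope.
Local Open Scope complex_scope.

Section Defs.
Variable R : realType.
Local Notation C := R[i].

Definition psdmx n (M : 'M[C]_n) : Prop :=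
  M \is hermsymmx /\ forall v : 'rV[C]_n, 0 <= (v *m M *m (map_mx conjC v)^T) 0 0.

Definition posdefmx n (M : 'M[C]_n) : Prop :=
  M \is hermsymmx /\ forall v : 'rV[C]_n, v != 0 -> 0 < (v *m M *m (map_mx conjC v)^T) 0 0.

Definition lowner n (A B : 'M[C]_n) : Prop := psdmx (B - A).

Definition mxfun n (f : R -> R) (A : 'M[C]_n) : 'M[C]_n :=
  invmx (spectralmx A) *m
  diag_mx (map_mx (fun z : C => (f (complex.Re z))%:C) (spectral_diag A)) *m spectralmx A.

Definition mxpow n (A : 'M[C]_n) (p : R) : 'M[C]_n := mxfun (fun x => powR x p) A.

Definition unital_positive_linear n k (Phi : 'M[C]_n -> 'M[C]_k) : Prop :=
  linear Phi /\ (forall X, psdmx X -> psdmx (Phi X)) /\ Phi 1%:M = 1%:M.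

Definition Kant (h p : R) : R :=
  if p == 1 then 1 else
  (powR h p - h) / ((p - 1) * (h - 1)) *
  powR ((p - 1) / p * ((powR h p - 1) / (powR h p - h))) p.

End Defs.

From HB Require Import structures.
From mathcomp Require Import all_boot all_order all_algebra.
From mathcomp Require Import sesquilinear spectral.
From mathcomp Require Import complex.
From mathcomp Require Import reals exp.
From mathcomp Require Import ring lra.
Import Order.TTheory GRing.Theory Num.Theory Num.Def.
Local Open Scope ring_scope.
Local Open Scope complex_scope.

(* For Hermitian [X] with spectrum in [[a, a h]] write [X = sum_i l_i P_i] with
   rank-one spectral projections [P_i].  If the unitary [V] diagonalises
   [Phi (X ^ p)], the numbers [w_ij = (V Phi(P_i) V^* )_jj] are nonnegative and,
   [Phi] being unital, [sum_i w_ij = 1].  The [j]-th eigenvalue of [Phi (X ^ p)]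
   is then [sum_i w_ij l_i ^ p] while [Tr Phi(X) = sum_j sum_i w_ij l_i], so
   [Tr (Phi (X ^ p)) ^ (1/p)] and [Tr Phi(X)] are sums of power means and of
   arithmetic means of the same weighted points of [[a, a h]].  These are
   compared by the scalar Kantorovich inequality: one side is Jensen's
   inequality, the other follows because [x ^ p] lies on one side of its chord
   over [[a, a h]], and that chord is [K(h,p)] times a tangent line of [x ^ p].
   Additivity of [Tr Phi] then gives the theorem with [h = M/m], [a = m] for
   [A] and [B], and [a = 2m] for [A + B]. *)

Section PowerMeans.
Context {R : realType}.
Implicit Types a b c g h k p q r s t x y : R.

Lemma powR_le_bernoulli s p : 0 < s -> 0 <= p <= 1 -> s `^ p <= 1 + p * (s - 1).
Proof.
move=> s0 /andP[p0 p1].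
have [->|pn0] := eqVneq p 0; first by rewrite powRr0; lra.
have [->|pn1] := eqVneq p 1; first by rewrite powRr1; lra.
have pp : 0 < p by rewrite lt_def pn0.
have q0 : 0 < 1 - p by rewrite subr_gt0 lt_neqAle pn1.
have conj_exp : p^-1^-1 + (1 - p)^-1^-1 = 1 by rewrite !invrK addrC subrK.
have ip : 0 < p^-1 by rewrite invr_gt0.
have iq : 0 < (1 - p)^-1 by rewrite invr_gt0.
(* Young's inequality for [s ^ p * 1] with the exponents [1/p] and [1/(1-p)]. *)
have := conjugate_powR (powR_ge0 s p) ler01 ip iq conj_exp.
rewrite -powRrM mulfV // powRr1 ?(ltW s0) // powR1 mulr1 !invrK; lra.
Qed.

Lemma powR_ge_bernoulli s p : 0 < s -> (p <= 0) || (1 <= p) ->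
  1 + p * (s - 1) <= s `^ p.
Proof.
move=> s0 /orP[p0|p1].
  have ln_le : ln s <= s - 1 by have := @le_ln1Dx R (s - 1); rewrite subrKC; apply; lra.
  rewrite /powR gt_eqF //; apply: le_trans (expR_ge1Dx _); nra.
have pp : 0 < p by lra.
have := @powR_le_bernoulli (s `^ p) p^-1 (powR_gt0 _ s0).
rewrite -powRrM mulfV ?gt_eqF // powRr1 ?(ltW s0) // invr_ge0 ltW //= invf_le1 //.
move=> /(_ p1) /(ler_wpM2l (ltW pp)).
rewrite mulrDr mulrA mulfV ?gt_eqF // mul1r mulr1; lra.
Qed.

Lemma powR_mul_div p {c t} : 0 < c -> 0 < t -> t `^ p = c `^ p * (t / c) `^ p.
Proof. by move=> c0 t0; rewrite -powRM ?ltW ?divr_gt0 // mulrC divfK ?gt_eqF. Qed.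

Lemma powRK {p g} : p != 0 -> 0 <= g -> (g `^ p) `^ p^-1 = g.
Proof. by move=> p0 g0; rewrite -powRrM mulfV // powRr1. Qed.

Lemma powRMK {p k g} : p != 0 -> 0 <= k -> 0 <= g ->
  (k * g `^ p) `^ p^-1 = k `^ p^-1 * g.
Proof. by move=> p0 k0 g0; rewrite powRM ?powR_ge0 // powRK. Qed.

Lemma lt0_ger_powR r x y : r < 0 -> 0 < x -> x <= y -> y `^ r <= x `^ r.
Proof.
move=> r0 x0 xy; have powRNN z : z `^ r = (z `^ (- r))^-1 by rewrite powRN invrK.
rewrite !powRNN lef_pV2 ?posrE ?powR_gt0 //; last lra.
by apply: ge0_ler_powR; rewrite ?nnegrE ?oppr_ge0; lra.
Qed.

Definition powR_tangent c p t := c `^ p * (1 + p * (t / c - 1)).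

Lemma powR_tangentE c p t : c != 0 ->
  powR_tangent c p t = c `^ p * (1 - p) + c `^ p * p / c * t.
Proof. by move=> c0; rewrite /powR_tangent; field. Qed.

Lemma powR_tangentxx p {c} : 0 < c -> powR_tangent c p c = c `^ p.
Proof. by move=> c0; rewrite /powR_tangent divff ?gt_eqF // subrr mulr0 addr0 mulr1. Qed.

Lemma powR_tangent_le c t p : 0 < c -> 0 < t -> (p <= 0) || (1 <= p) ->
  powR_tangent c p t <= t `^ p.
Proof.
move=> c0 t0 hp; rewrite (powR_mul_div p c0 t0) ler_wpM2l ?powR_ge0 //.
by rewrite powR_ge_bernoulli ?divr_gt0.
Qed.

Lemma powR_le_tangent c t p : 0 < c -> 0 < t -> 0 <= p <= 1 ->
  t `^ p <= powR_tangent c p t.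
Proof.
move=> c0 t0 hp; rewrite (powR_mul_div p c0 t0) ler_wpM2l ?powR_ge0 //.
by rewrite powR_le_bernoulli ?divr_gt0.
Qed.

Lemma powR_tangent_chord x p a b : x != 0 ->
  (b - x) * powR_tangent x p a + (x - a) * powR_tangent x p b = x `^ p * (b - a).
Proof. by move=> x0; rewrite /powR_tangent; field. Qed.

Definition powR_chord a b p x := ((b - x) * a `^ p + (x - a) * b `^ p) / (b - a).

Lemma powR_chordE a b p x : a != b ->
  powR_chord a b p x = (b * a `^ p - a * b `^ p) / (b - a) +
                       (b `^ p - a `^ p) / (b - a) * x.
Proof. by move=> ab; rewrite /powR_chord; field; rewrite subr_eq0 eq_sym. Qed.

Lemma powR_le_chord a b p x : 0 < a -> a <= x <= b -> a < b ->
  (p <= 0) || (1 <= p) -> x `^ p <= powR_chord a b p x.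
Proof.
move=> a0 /andP[ax xb] ab hp; have x0 : 0 < x by lra.
rewrite /powR_chord ler_pdivlMr ?subr_gt0 // -(@powR_tangent_chord x p a b) ?gt_eqF //.
by apply: lerD; apply: ler_wpM2l; rewrite ?subr_ge0 ?powR_tangent_le //; lra.
Qed.

Lemma powR_ge_chord a b p x : 0 < a -> a <= x <= b -> a < b ->
  0 <= p <= 1 -> powR_chord a b p x <= x `^ p.
Proof.
move=> a0 /andP[ax xb] ab hp; have x0 : 0 < x by lra.
rewrite /powR_chord ler_pdivrMr ?subr_gt0 // -(@powR_tangent_chord x p a b) ?gt_eqF //.
by apply: lerD; apply: ler_wpM2l; rewrite ?subr_ge0 ?powR_le_tangent //; lra.
Qed.

Lemma powR_ltr_exp {h p q} : 1 < h -> p < q -> h `^ p < h `^ q.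
Proof.
move=> h1 pq; rewrite /powR gt_eqF; last lra.
by rewrite ltr_expR ltr_pM2r // ln_gt0.
Qed.

Lemma powR_sub_sign {h p q} : 1 < h -> p != q -> 0 < (p - q) * (h `^ p - h `^ q).
Proof.
by move=> h1; case: (ltgtP p q) => // pq _; have := powR_ltr_exp h1 pq; nra.
Qed.

Lemma divr_gt0_mul x y : 0 < x * y -> 0 < x / y.
Proof.
move=> xy; have y0 : y != 0 by apply: contraTneq xy => ->; rewrite mulr0 ltxx.
have -> : x / y = x * y / y ^+ 2 by field.
by rewrite divr_gt0 // lt_def expf_neq0 //= sqr_ge0.
Qed.

Definition kant_coef h p := (h `^ p - h) / ((p - 1) * (h - 1)).
Definition kant_base h p := (p - 1) / p * ((h `^ p - 1) / (h `^ p - h)).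

Lemma KantE h p : p != 1 -> Kant h p = kant_coef h p * kant_base h p `^ p.
Proof. by move=> /negbTE p1; rewrite /Kant p1. Qed.

Lemma kant_coef_gt0 {h p} : 1 < h -> p != 1 -> 0 < kant_coef h p.
Proof.
move=> h1 p1; have := powR_sub_sign h1 p1; rewrite powRr1; last lra.
by move=> sgn; apply: divr_gt0_mul; nra.
Qed.

Lemma kant_base_gt0 {h p} : 1 < h -> p != 0 -> p != 1 -> 0 < kant_base h p.
Proof.
move=> h1 p0 p1.
have := powR_sub_sign h1 p0; have := powR_sub_sign h1 p1.
rewrite powRr0 powRr1 ?subr0; last lra.
by move=> sgn1 sgn0; rewrite /kant_base mulf_div; apply: divr_gt0_mul; nra.
Qed.

Lemma Kant_gt0 {h p} : 1 < h -> p != 0 -> 0 < Kant h p.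
Proof.
move=> h1 p0; have [->|p1] := eqVneq p 1; first by rewrite /Kant eqxx.
by rewrite KantE // mulr_gt0 ?powR_gt0 ?kant_coef_gt0 ?kant_base_gt0.
Qed.

(* The tangent point is [a / kant_base h p]; for [p = 1] every tangent line
   of [x ^ p] is the identity and [Kant h 1 = 1]. *)
Lemma powR_chord_Kant {a h p} : 0 < a -> 1 < h -> p != 0 ->
  exists2 c, 0 < c &
    forall y, powR_chord a (a * h) p y = Kant h p * powR_tangent c p y.
Proof.
move=> a0 h1 p0; have h0 : 0 < h by lra.
have ah0 : 0 < a * h by rewrite mulr_gt0.
have ah : a * h - a != 0 by apply: lt0r_neq0; nra.
have [->|p1] := eqVneq p 1.
  exists a => // y; rewrite /Kant eqxx /powR_chord /powR_tangent.
  by rewrite !powRr1 ?(ltW a0) ?(ltW ah0) //; field; rewrite ah gt_eqF.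
have r0 := kant_base_gt0 h1 p0 p1; set r := kant_base h p in r0 *.
exists (a / r) => [|y]; first exact: divr_gt0.
rewrite KantE // /powR_tangent mulrA -(mulrA (kant_coef h p)) -powRM ?ltW ?divr_gt0 //.
rewrite [r * _]mulrC divfK ?gt_eqF // /powR_chord powRM ?(ltW a0) ?(ltW h0) //.
have := lt0r_neq0 (powR_sub_sign h1 p1); have := lt0r_neq0 (powR_sub_sign h1 p0).
rewrite powRr0 powRr1 ?subr0 ?mulf_eq0 ?negb_or; last lra.
move=> /andP[_ hp1] /andP[p1' hph].
rewrite /kant_coef /r /kant_base; field.
by rewrite hph hp1 p0 p1' ah gt_eqF // subr_eq0 gt_eqF.
Qed.

Section WeightedMean.
Context {I : finType} {w x : I -> R} {a h : R}.
Hypotheses (a_gt0 : 0 < a) (h_gt1 : 1 < h).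
Hypotheses (w_ge0 : forall i, 0 <= w i) (w_sum1 : \sum_i w i = 1).
Hypothesis x_range : forall i, a <= x i <= a * h.

Let mean := \sum_i w i * x i.

Lemma wmean_affine (f : R -> R) al be : (forall t, f t = al + be * t) ->
  \sum_i w i * f (x i) = f mean.
Proof.
move=> fE; under eq_bigr => i _ do rewrite fE mulrDr mulrCA.
by rewrite fE big_split /= -mulr_suml w_sum1 mul1r -mulr_sumr.
Qed.

Lemma wmean_range : a <= mean <= a * h.
Proof.
have wconst c : \sum_i w i * c = c by rewrite -mulr_suml w_sum1 mul1r.
rewrite -{1}(wconst a) -(wconst (a * h)) /mean.
by apply/andP; split; apply: ler_sum => i _;
  apply: ler_wpM2l => //; case/andP: (x_range i).
Qed.

Let mean_gt0 : 0 < mean.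
Proof. by case/andP: wmean_range => am _; apply: lt_le_trans am. Qed.

Let x_gt0 i : 0 < x i.
Proof. by case/andP: (x_range i) => ax _; apply: lt_le_trans ax. Qed.

Let ah_gt_a : a < a * h.
Proof. by rewrite ltr_pMr. Qed.

Let wmean_tangent c p : c != 0 ->
  \sum_i w i * powR_tangent c p (x i) = powR_tangent c p mean.
Proof. by move=> c0; apply: wmean_affine => t; apply: powR_tangentE. Qed.

Let wmean_chord p :
  \sum_i w i * powR_chord a (a * h) p (x i) = powR_chord a (a * h) p mean.
Proof. by apply: wmean_affine => t; apply: powR_chordE; rewrite lt_eqF. Qed.

Lemma powR_wmean_cvx {p} : p != 0 -> (p <= 0) || (1 <= p) ->
  mean `^ p <= \sum_i w i * x i `^ p <= Kant h p * mean `^ p.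
Proof.
move=> p0 hp; have [c c0 chordE] := powR_chord_Kant a_gt0 h_gt1 p0.
apply/andP; split.
  rewrite -{1}(powR_tangentxx p mean_gt0) -wmean_tangent ?gt_eqF //.
  by apply: ler_sum => i _; rewrite ler_wpM2l ?powR_tangent_le.
apply: le_trans (_ : _ <= \sum_i w i * powR_chord a (a * h) p (x i)) _.
  by apply: ler_sum => i _; rewrite ler_wpM2l ?powR_le_chord.
by rewrite wmean_chord chordE ler_wpM2l ?(ltW (Kant_gt0 h_gt1 p0)) ?powR_tangent_le.
Qed.

Lemma powR_wmean_ccv {p} : 0 < p <= 1 ->
  Kant h p * mean `^ p <= \sum_i w i * x i `^ p <= mean `^ p.
Proof.
move=> /andP[p_gt0 p1]; have p0 := lt0r_neq0 p_gt0.
have hp : 0 <= p <= 1 by rewrite ltW.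
have [c c0 chordE] := powR_chord_Kant a_gt0 h_gt1 p0.
apply/andP; split; last first.
  rewrite -(powR_tangentxx p mean_gt0) -wmean_tangent ?gt_eqF //.
  by apply: ler_sum => i _; rewrite ler_wpM2l ?powR_le_tangent.
apply: le_trans (_ : \sum_i w i * powR_chord a (a * h) p (x i) <= _).
  by rewrite wmean_chord chordE ler_wpM2l ?(ltW (Kant_gt0 h_gt1 p0)) ?powR_le_tangent.
by apply: ler_sum => i _; rewrite ler_wpM2l ?powR_ge_chord.
Qed.

Lemma powR_wmean_root_le {p} : p != 0 -> p <= 1 ->
  Kant h p `^ p^-1 * mean <= (\sum_i w i * x i `^ p) `^ p^-1 <= mean.
Proof.
move=> p0 p1; have K0 := Kant_gt0 h_gt1 p0; have mp0 := powR_gt0 p mean_gt0.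
rewrite -{2}(powRK p0 (ltW mean_gt0)) -(powRMK p0 (ltW K0) (ltW mean_gt0)).
have [p_lt0|p_gt0] := ltP p 0.
  have cvx : (p <= 0) || (1 <= p) by rewrite ltW.
  have /andP[lo hi] := powR_wmean_cvx p0 cvx.
  apply/andP; split; apply: lt0_ger_powR; rewrite ?invr_lt0 //; lra.
have ccv : 0 < p <= 1 by rewrite lt_def p0 p_gt0 p1.
have /andP[lo hi] := powR_wmean_ccv ccv.
have Kmp0 : 0 < Kant h p * mean `^ p by rewrite mulr_gt0.
by apply/andP; split; apply: ge0_ler_powR; rewrite ?nnegrE ?invr_ge0; lra.
Qed.

Lemma powR_wmean_root_ge {p} : 1 <= p ->
  mean <= (\sum_i w i * x i `^ p) `^ p^-1 <= Kant h p `^ p^-1 * mean.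
Proof.
move=> p1; have p0 : p != 0 by rewrite gt_eqF //; lra.
have K0 := Kant_gt0 h_gt1 p0; have mp0 := powR_gt0 p mean_gt0.
rewrite -{1}(powRK p0 (ltW mean_gt0)) -(powRMK p0 (ltW K0) (ltW mean_gt0)).
have cvx : (p <= 0) || (1 <= p) by rewrite p1 orbT.
have /andP[lo hi] := powR_wmean_cvx p0 cvx.
have Kmp0 : 0 < Kant h p * mean `^ p by rewrite mulr_gt0.
by apply/andP; split; apply: ge0_ler_powR; rewrite ?nnegrE ?invr_ge0; lra.
Qed.

End WeightedMean.

End PowerMeans.

Section Sandwich.
Context {F : numFieldType}.
Implicit Types c tA tB tS fA fB : F.

Lemma ler_sandwichD c tA tB tS fA fB : 0 < c ->
  c * fA <= tA <= fA -> c * fB <= tB <= fB -> c * (fA + fB) <= tS <= fA + fB ->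
  c * (tA + tB) <= tS <= c^-1 * (tA + tB).
Proof.
move=> c0 /andP[lA uA] /andP[lB uB] /andP[lS uS]; apply/andP; split.
  by apply: le_trans lS; rewrite ler_pM2l //; apply: lerD.
by apply: (le_trans uS); rewrite ler_pdivlMl // mulrDr; apply: lerD.
Qed.

Lemma ger_sandwichD c tA tB tS fA fB : 0 < c ->
  fA <= tA <= c * fA -> fB <= tB <= c * fB -> fA + fB <= tS <= c * (fA + fB) ->
  c^-1 * (tA + tB) <= tS <= c * (tA + tB).
Proof.
move=> c0 /andP[lA uA] /andP[lB uB] /andP[lS uS]; apply/andP; split.
  by apply: le_trans lS; rewrite ler_pdivrMl // mulrDr; apply: lerD.
by apply: (le_trans uS); rewrite ler_pM2l //; apply: lerD.
Qed.

End Sandwich.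

Section PositiveMatrices.
Local Open Scope sesquilinear_scope.
Context {R : realType}.
Local Notation C := R[i].

Lemma trmxC_mul m n p (A : 'M[C]_(m, n)) (B : 'M[C]_(n, p)) :
  (A *m B)^t* = B^t* *m A^t*.
Proof. by rewrite trmx_mul map_mxM. Qed.

Lemma hermsymmxP n (M : 'M[C]_n) : reflect (M^t* = M) (M \is hermsymmx).
Proof.
apply: (iffP (is_hermitianmxP _ _ _)); rewrite expr0 scale1r => E.
  by rewrite -E.
by rewrite E.
Qed.

Lemma psdmx_conj m n (W : 'M[C]_(m, n)) (M : 'M[C]_m) :
  psdmx M -> psdmx (W^t* *m M *m W).
Proof.
move=> [/hermsymmxP hM qM]; split.
  by apply/hermsymmxP; rewrite !trmxC_mul trmxCK hM mulmxA.
by move=> v; have := qM (v *m W^t*); rewrite !map_trmx !trmxC_mul trmxCK !mulmxA.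
Qed.

Lemma psdmx1 n : psdmx (1%:M : 'M[C]_n).
Proof.
split; first by apply/hermsymmxP; rewrite trmx1 map_mx1.
move=> v; rewrite mulmx1 mxE; apply: sumr_ge0 => i _.
by rewrite !mxE mul_conjC_ge0.
Qed.

Lemma psdmx_delta n (i : 'I_n) : psdmx (delta_mx i i : 'M[C]_n).
Proof.
have -> : delta_mx i i = (delta_mx 0 i : 'M[C]_(1, n))^t* *m 1%:M *m delta_mx 0 i.
  by rewrite mulmx1 trmx_delta map_delta_mx mul_delta_mx.
exact/psdmx_conj/psdmx1.
Qed.

Lemma psdmxD n (A B : 'M[C]_n) : psdmx A -> psdmx B -> psdmx (A + B).
Proof.
move=> [/hermsymmxP hA qA] [/hermsymmxP hB qB]; split.
  by apply/hermsymmxP; rewrite !raddfD /= hA hB.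
by move=> v; rewrite mulmxDr mulmxDl mxE addr_ge0.
Qed.

Lemma psdmxZ n (c : R) (A : 'M[C]_n) : 0 <= c -> psdmx A -> psdmx (c%:C *: A).
Proof.
move=> c0 [/hermsymmxP hA qA]; split.
  apply/hermsymmxP; rewrite linearZ /= map_mxZ hA.
  by congr (_ *: _); exact: conjc_real.
by move=> v; rewrite -scalemxAr -scalemxAl mxE mulr_ge0 ?ler0c.
Qed.

Lemma psdmx_sum n (I : finType) (c : I -> R) (A : I -> 'M[C]_n) :
  (forall i, 0 <= c i) -> (forall i, psdmx (A i)) ->
  psdmx (\sum_i (c i)%:C *: A i).
Proof.
move=> c0 A_psd; apply: (big_ind (@psdmx R n)).
- by rewrite -(scale0r 1%:M) -[0]/(0%:C); apply/psdmxZ/psdmx1.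
- exact: psdmxD.
- by move=> i _; exact: psdmxZ.
Qed.

Lemma psdmx_conj_diag_ge0 {n} (U : 'M[C]_n) {N : 'M[C]_n} j :
  psdmx N -> 0 <= (U *m N *m U^t*) j j.
Proof.
move=> [_ qN]; have := qN (row j U); congr (0 <= _).
rewrite !mxE; apply: eq_bigr => l _; rewrite !mxE; congr (_ * _).
by apply: eq_bigr => k _; rewrite !mxE.
Qed.

Lemma lownerD n (A1 A2 B1 B2 : 'M[C]_n) :
  lowner A1 B1 -> lowner A2 B2 -> lowner (A1 + A2) (B1 + B2).
Proof. by rewrite /lowner opprD addrACA; apply: psdmxD. Qed.

Lemma lowner_hermsymmx {n} {a : R} {X : 'M[C]_n} :
  lowner (a%:C)%:M X -> X \is hermsymmx.
Proof.
move=> [/hermsymmxP hXa _]; apply/hermsymmxP.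
rewrite -(subrK (a%:C)%:M X) linearD /= map_mxD hXa tr_scalar_mx map_scalar_mx /=.
by congr (_ + _%:M); exact: conjc_real.
Qed.

Local Notation U X := (spectralmx X).
Local Notation eig X i := (complex.Re (spectral_diag X 0 i)).

Section Spectral.
Context {n : nat}.
Implicit Types (X N : 'M[C]_n) (f : R -> R).

Lemma spectralmx_mulC X : U X *m (U X)^t* = 1%:M.
Proof. exact/unitarymxP/spectral_unitarymx. Qed.

Lemma spectralmx_Cmul X : (U X)^t* *m U X = 1%:M.
Proof. by rewrite -invmx_unitary ?spectral_unitarymx // mulVmx // spectral_unit. Qed.

Lemma spectral_diag_real X i : X \is hermsymmx -> spectral_diag X 0 i = (eig X i)%:C.
Proof.
by move=> /hermitian_spectral_diag_real /mxOverP /(_ 0 i) /RRe_real ->.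
Qed.

Lemma spectral_conj_diag X : X \is hermsymmx ->
  U X *m X *m (U X)^t* = diag_mx (spectral_diag X).
Proof.
move=> /hermitian_normalmx /orthomx_spectralP {2}->.
rewrite invmx_unitary ?spectral_unitarymx // !mulmxA spectralmx_mulC mul1mx.
by rewrite -mulmxA spectralmx_mulC mulmx1.
Qed.

Lemma mxtrace_unitary_conj (V : 'M[C]_n) N : V \is unitarymx ->
  \tr (V *m N *m V^t* ) = \tr N.
Proof.
move=> VU; rewrite mxtrace_mulC mulmxA -(invmx_unitary VU).
by rewrite mulVmx ?mul1mx ?unitarymx_unit.
Qed.

Definition spectral_proj X i := (U X)^t* *m delta_mx i i *m U X.

Lemma psdmx_spectral_proj X i : psdmx (spectral_proj X i).
Proof. exact/psdmx_conj/psdmx_delta. Qed.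

Lemma sum_spectral_proj X : \sum_i spectral_proj X i = 1%:M.
Proof. by rewrite -mulmx_suml -mulmx_sumr -mx1_sum_delta mulmx1 spectralmx_Cmul. Qed.

Lemma mxfun_spectral_sum f X :
  mxfun f X = \sum_i (f (eig X i))%:C *: spectral_proj X i.
Proof.
rewrite /mxfun invmx_unitary ?spectral_unitarymx // diag_mx_sum_delta.
rewrite mulmx_sumr mulmx_suml; apply: eq_bigr => i _.
by rewrite mxE -scalemxAr -scalemxAl.
Qed.

Lemma mxfun_id X : X \is hermsymmx -> mxfun id X = X.
Proof.
move=> hX; rewrite /mxfun; have /orthomx_spectralP {4}-> := hermitian_normalmx hX.
congr (_ *m diag_mx _ *m _); apply/matrixP => i j.
by rewrite mxE ord1 [RHS]spectral_diag_real.
Qed.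

Lemma mxtrace_mxfun f X : \tr (mxfun f X) = \sum_i (f (eig X i))%:C.
Proof.
rewrite /mxfun mxtrace_mulC mulmxA mulmxV ?spectral_unit // mul1mx mxtrace_diag.
by apply: eq_bigr => i _; rewrite mxE.
Qed.

Lemma spectral_conj_shift X c : X \is hermsymmx ->
  U X *m (X - c%:M) *m (U X)^t* = diag_mx (spectral_diag X) - c%:M.
Proof.
move=> hX; rewrite mulmxBr mulmxBl spectral_conj_diag // mul_mx_scalar -scalemxAl.
by rewrite spectralmx_mulC scalemx1.
Qed.

Lemma lowner_eig_ge (a : R) X i : lowner (a%:C)%:M X -> a <= eig X i.
Proof.
move=> hl; have hX := lowner_hermsymmx hl.
have := psdmx_conj_diag_ge0 (U X) i hl; rewrite spectral_conj_shift // !mxE eqxx !mulr1n.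
by rewrite spectral_diag_real // -rmorphB ler0c subr_ge0.
Qed.

Lemma lowner_eig_le (b : R) X i : X \is hermsymmx -> lowner X (b%:C)%:M -> eig X i <= b.
Proof.
move=> hX hl; have := psdmx_conj_diag_ge0 (U X) i hl.
rewrite -opprB mulmxN mulNmx spectral_conj_shift // !mxE eqxx !mulr1n.
by rewrite spectral_diag_real // -rmorphB -rmorphN ler0c oppr_ge0 subr_le0.
Qed.

End Spectral.

Section UnitalPositiveMap.
Context {n k : nat} {Phi : 'M[C]_n -> 'M[C]_k}.
Hypothesis Phi_upl : unital_positive_linear Phi.

HB.instance Definition _ := GRing.isLinear.Build C 'M[C]_n 'M[C]_k *:%R Phi Phi_upl.1.

Definition Phi_weight (V : 'M[C]_k) (X : 'M[C]_n) i j :=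
  complex.Re ((V *m Phi (spectral_proj X i) *m V^t* ) j j).

Lemma Phi_weightE V X i j :
  (V *m Phi (spectral_proj X i) *m V^t* ) j j = (Phi_weight V X i j)%:C.
Proof.
apply/esym/RRe_real/ger0_real/psdmx_conj_diag_ge0/Phi_upl.2.1.
exact: psdmx_spectral_proj.
Qed.

Lemma Phi_weight_ge0 V X i j : 0 <= Phi_weight V X i j.
Proof.
rewrite -ler0c -Phi_weightE; apply/psdmx_conj_diag_ge0/Phi_upl.2.1.
exact: psdmx_spectral_proj.
Qed.

Lemma sum_Phi_weight {V} X j : V \is unitarymx -> \sum_i Phi_weight V X i j = 1.
Proof.
move=> /unitarymxP VV; apply: complexI; rewrite rmorph_sum rmorph1 /=.
under eq_bigr do rewrite -Phi_weightE.
rewrite -summxE -mulmx_suml -mulmx_sumr -linear_sum sum_spectral_proj /= Phi_upl.2.2.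
by rewrite mulmx1 VV mxE eqxx.
Qed.

Lemma Phi_mxfun_conj_diag f X V j :
  (V *m Phi (mxfun f X) *m V^t* ) j j =
  (\sum_i Phi_weight V X i j * f (eig X i))%:C.
Proof.
rewrite mxfun_spectral_sum linear_sum mulmx_sumr mulmx_suml summxE rmorph_sum.
apply: eq_bigr => i _; rewrite linearZ -scalemxAr -scalemxAl mxE Phi_weightE.
by rewrite -rmorphM mulrC.
Qed.

Lemma mxtrace_Phi {V X} : V \is unitarymx -> X \is hermsymmx ->
  \tr (Phi X) = (\sum_j \sum_i Phi_weight V X i j * eig X i)%:C.
Proof.
move=> VU hX; rewrite -(mxtrace_unitary_conj _ (Phi X) VU) -{1}(mxfun_id X hX).
by rewrite rmorph_sum; apply: eq_bigr => j _; rewrite Phi_mxfun_conj_diag.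
Qed.

Lemma mxtrace_powR_Phi X p :
  let V := U (Phi (mxpow X p)) in
  \tr (mxpow (Phi (mxpow X p)) p^-1) =
  (\sum_j (\sum_i Phi_weight V X i j * eig X i `^ p) `^ p^-1)%:C.
Proof.
move=> V; have psdY : psdmx (Phi (mxpow X p)).
  apply: Phi_upl.2.1; rewrite /mxpow mxfun_spectral_sum.
  by apply: psdmx_sum => i; [exact: powR_ge0 | exact: psdmx_spectral_proj].
rewrite /mxpow mxtrace_mxfun rmorph_sum; apply: eq_bigr => j _.
have := Phi_mxfun_conj_diag (fun x => x `^ p) X V j.
by rewrite -/(mxpow X p) spectral_conj_diag ?psdY.1 // mxE eqxx mulr1n => ->.
Qed.

Section KantorovichBounds.
Context {X : 'M[C]_n} {a h p : R}.
Hypotheses (a_gt0 : 0 < a) (h_gt1 : 1 < h).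
Hypotheses (X_ge : lowner (a%:C)%:M X) (X_le : lowner X ((a * h)%:C)%:M).

Let hX := lowner_hermsymmx X_ge.
Let V := U (Phi (mxpow X p)).
Let VU : V \is unitarymx := spectral_unitarymx _.
Let eig_range i : a <= eig X i <= a * h.
Proof. by rewrite lowner_eig_ge ?lowner_eig_le. Qed.

Lemma mxtrace_powR_Phi_le : p != 0 -> p <= 1 ->
  (Kant h p `^ p^-1)%:C * \tr (Phi X) <= \tr (mxpow (Phi (mxpow X p)) p^-1)
    <= \tr (Phi X).
Proof.
move=> p0 p1; rewrite mxtrace_powR_Phi (mxtrace_Phi VU hX) -rmorphM !lecR mulr_sumr.
have wmean j := powR_wmean_root_le a_gt0 h_gt1 (Phi_weight_ge0 V X ^~ j)
  (sum_Phi_weight X j VU) eig_range p0 p1.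
by apply/andP; split; apply: ler_sum => j _; case/andP: (wmean j).
Qed.

Lemma mxtrace_powR_Phi_ge : 1 <= p ->
  \tr (Phi X) <= \tr (mxpow (Phi (mxpow X p)) p^-1)
    <= (Kant h p `^ p^-1)%:C * \tr (Phi X).
Proof.
move=> p1; rewrite mxtrace_powR_Phi (mxtrace_Phi VU hX) -rmorphM !lecR mulr_sumr.
have wmean j := powR_wmean_root_ge a_gt0 h_gt1 (Phi_weight_ge0 V X ^~ j)
  (sum_Phi_weight X j VU) eig_range p1.
by apply/andP; split; apply: ler_sum => j _; case/andP: (wmean j).
Qed.

End KantorovichBounds.

Section TraceSuperadditivity.
Context {A B : 'M[C]_n} {a h p : R}.
Hypotheses (a_gt0 : 0 < a) (h_gt1 : 1 < h).
Hypotheses (A_ge : lowner (a%:C)%:M A) (A_le : lowner A ((a * h)%:C)%:M).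
Hypotheses (B_ge : lowner (a%:C)%:M B) (B_le : lowner B ((a * h)%:C)%:M).

Let T X := \tr (mxpow (Phi (mxpow X p)) p^-1).
Let c := (Kant h p `^ p^-1)%:C.

Let aa_gt0 : 0 < a + a. Proof. exact: addr_gt0. Qed.
Let AB_ge : lowner ((a + a)%:C)%:M (A + B).
Proof. by rewrite !raddfD; exact: lownerD. Qed.
Let AB_le : lowner (A + B) (((a + a) * h)%:C)%:M.
Proof. by rewrite mulrDl !raddfD; exact: lownerD. Qed.
Let trD : \tr (Phi (A + B)) = \tr (Phi A) + \tr (Phi B).
Proof. by rewrite linearD mxtraceD. Qed.
Let c_gt0 : p != 0 -> 0 < c.
Proof. by move=> p0; rewrite ltcE /= eqxx powR_gt0 // Kant_gt0. Qed.

Lemma mxtrace_powR_Phi_add_le : p != 0 -> p <= 1 ->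
  c * (T A + T B) <= T (A + B) <= c^-1 * (T A + T B).
Proof.
move=> p0 p1.
apply: (ler_sandwichD c _ _ _ (\tr (Phi A)) (\tr (Phi B)) (c_gt0 p0)).
- exact: mxtrace_powR_Phi_le a_gt0 h_gt1 A_ge A_le p0 p1.
- exact: mxtrace_powR_Phi_le a_gt0 h_gt1 B_ge B_le p0 p1.
- by rewrite -trD; exact: mxtrace_powR_Phi_le aa_gt0 h_gt1 AB_ge AB_le p0 p1.
Qed.

Lemma mxtrace_powR_Phi_add_ge : 1 <= p ->
  c^-1 * (T A + T B) <= T (A + B) <= c * (T A + T B).
Proof.
move=> p1; have p0 : p != 0 by rewrite gt_eqF // (lt_le_trans ltr01).
apply: (ger_sandwichD c _ _ _ (\tr (Phi A)) (\tr (Phi B)) (c_gt0 p0)).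
- exact: mxtrace_powR_Phi_ge a_gt0 h_gt1 A_ge A_le p1.
- exact: mxtrace_powR_Phi_ge a_gt0 h_gt1 B_ge B_le p1.
- by rewrite -trD; exact: mxtrace_powR_Phi_ge aa_gt0 h_gt1 AB_ge AB_le p1.
Qed.

End TraceSuperadditivity.

End UnitalPositiveMap.

End PositiveMatrices.

Theorem theorem4p8 (R : realType) (n k : nat) (A B : 'M[R[i]]_n) (m M : R)
  (Phi : 'M[R[i]]_n -> 'M[R[i]]_k) :
  0 < m -> m < M ->
  posdefmx A -> posdefmx B ->
  lowner (m%:C)%:M A -> lowner A (M%:C)%:M ->
  lowner (m%:C)%:M B -> lowner B (M%:C)%:M ->
  unital_positive_linear Phi ->
  let h := M / m in
  let T (X : 'M[R[i]]_n) (p : R) := \tr (mxpow (Phi (mxpow X p)) p^-1) in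
  (forall p : R, p < 0 \/ (0 < p /\ p <= 1) ->
     (powR (Kant h p) p^-1)%:C * (T A p + T B p) <= T (A + B) p /\
     T (A + B) p <= (powR (Kant h p) (- p^-1))%:C * (T A p + T B p)) /\
  (forall p : R, 1 <= p ->
     (powR (Kant h p) (- p^-1))%:C * (T A p + T B p) <= T (A + B) p /\
     T (A + B) p <= (powR (Kant h p) p^-1)%:C * (T A p + T B p)).
Proof.
(* Positive definiteness of [A] and [B] already follows from [m%:M <= A, B]. *)
move=> m0 mM _ _ lA uA lB uB Phi_upl h T.
have h1 : 1 < h by rewrite ltr_pdivlMr // mul1r.
have eM : M = m * h by rewrite /h mulrC divfK ?gt_eqF.
rewrite eM in uA uB.
have Kinv q : (Kant h q `^ (- q^-1))%:C = (Kant h q `^ q^-1)%:C^-1.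
  by rewrite powRN fmorphV.
split=> p hp; rewrite Kinv.
  have p0 : p != 0 by case: hp => [/lt_eqF|[/gt_eqF]] ->.
  have p1 : p <= 1 by case: hp => [/ltW/le_trans->|[]].
  by have /andP := mxtrace_powR_Phi_add_le Phi_upl m0 h1 lA uA lB uB p0 p1.
by have /andP := mxtrace_powR_Phi_add_ge Phi_upl m0 h1 lA uA lB uB hp.
Qed.
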